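(* Let $T$ be a training dataset with $m$ features and $n$ records. Let $y_{\min}$ be the class label with the fewest records in $T$, and $n_{y_{\min}}$ the number of records in $T$ with label $y_{\min}$ (assume $n_{y_{\min}}\ge 2$). Then the naive Bayes classification algorithm is $\delta$-training stable on $T$ with $\delta=\left(\frac{n_{y_{\min}}}{n_{y_{\min}}-1}\right)^{m-1}\frac{n}{n-1}$.
   Context: Records are pairs $(\mathbf{x},y)$ with $\mathbf{x}=(x_1,\dots,x_m)\in X^m$ and $y\in Y$ finite; a training dataset is a finite multiset of records. For a dataset $S$ of size $N_S$, let $n^S_y$ be the number of records with label $y$ and $n^S_{x_i,y}$ the number with $i$-th feature equal to $x_i$ and label $y$. The naive Bayes classifier trained on $S$ gives $p_{\mathcal{A}(S)}(y\mid\mathbf{x})=\hat p_S(y)\prod_{i=1}^m\hat p_S(x_i\mid y)$ with $\hat p_S(y)=n^S_y/N_S$ and $\hat p_S(x_i\mid y)=n^S_{x_i,y}/n^S_y$ (any normalization constant over labels is ignored in the ratios). $\mathcal{A}$ is $\delta$-training stable on $T$ (for a constant $\delta>1$) if for every $t=(\mathbf{x}^{(t)},y^{(t)})\in T$ with $p_{\mathcal{A}(T\setminus\{t\})}(y^{(t)}\mid\mathbf{x}^{(t)})>0$ and $p_{\mathcal{A}(T)}(y^{(t)}\mid\mathbf{x}^{(t)})>0$, setting $\gamma_t=\max\Big(\delta,\ \frac{p_{\mathcal{A}(T)}(y^{(t)}\mid\mathbf{x}^{(t)})}{p_{\mathcal{A}(T\setminus\{t\})}(y^{(t)}\mid\mathbf{x}^{(t)})},\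 \frac{p_{\mathcal{A}(T\setminus\{t\})}(y^{(t)}\mid\mathbf{x}^{(t)})}{p_{\mathcal{A}(T)}(y^{(t)}\mid\mathbf{x}^{(t)})}\Big)$, one has $\gamma_t^{-1}p_{\mathcal{A}(T\setminus\{t\})}(y\mid\mathbf{x})\le p_{\mathcal{A}(T)}(y\mid\mathbf{x})\le\gamma_t\,p_{\mathcal{A}(T\setminus\{t\})}(y\mid\mathbf{x})$ for all $\mathbf{x}\in X^m$, $y\in Y$. *)

From HB Require Import structures.
From mathcomp Require Import all_boot all_order all_algebra.
Set Implicit Arguments. Unset Strict Implicit. Unset Printing Implicit Defensive.
Import Order.TTheory GRing.Theory Num.Theory.
Local Open Scope ring_scope.

(* A training dataset is a finite multiset of records, represented as a seq;
   T \ {t} (removal of one copy of t) is [rem t T]. *)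
Definition record (X : eqType) (Y : finType) (m : nat) := (m.-tuple X * Y)%type.

Definition cnt_y (X : eqType) (Y : finType) (m : nat)
  (S : seq (record X Y m)) (y : Y) : nat :=
  count (fun r => r.2 == y) S.

Definition cnt_xy (X : eqType) (Y : finType) (m : nat)
  (S : seq (record X Y m)) (i : 'I_m) (xi : X) (y : Y) : nat :=
  count (fun r => (tnth r.1 i == xi) && (r.2 == y)) S.

(* p_{A(S)}(y | x) = (n_y / N) * prod_i (n_{x_i,y} / n_y)  (division by 0 is 0). *)
Definition nb_prob (R : realFieldType) (X : eqType) (Y : finType) (m : nat)
  (S : seq (record X Y m)) (x : m.-tuple X) (y : Y) : R :=
  ((cnt_y S y)%:R / (size S)%:R) *
  \prod_(i < m) ((cnt_xy S i (tnth x i) y)%:R / (cnt_y S y)%:R).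

Definition training_stable (R : realFieldType) (X : eqType) (Y : finType) (m : nat)
  (A : seq (record X Y m) -> m.-tuple X -> Y -> R) (delta : R)
  (T : seq (record X Y m)) : Prop :=
  1 < delta /\
  forall t : record X Y m, t \in T ->
    0 < A (rem t T) t.1 t.2 -> 0 < A T t.1 t.2 ->
    let gamma := Num.max delta
        (Num.max (A T t.1 t.2 / A (rem t T) t.1 t.2)
                 (A (rem t T) t.1 t.2 / A T t.1 t.2)) in
    forall (x : m.-tuple X) (y : Y),
      gamma^-1 * A (rem t T) x y <= A T x y /\ A T x y <= gamma * A (rem t T) x y.

From HB Require Import structures.
From mathcomp Require Import all_boot all_order all_algebra.
From mathcomp Require Import ring lra.
Import Order.TTheory GRing.Theory Num.Theory.
Set Implicit Arguments. Unset Strict Implicit.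
Local Open Scope ring_scope.

(* Removing a record t from T (N records, a of them labelled t.2) leaves every
   count for a label y <> t.2 unchanged, so then p_T = (N-1)/N p_{T\t}.  For
   y = t.2, p_T = a^(1-m) N^-1 prod_i n_{x_i,y}, and each of the m feature
   counts drops by at most one, giving
   p_T >= (N-1)/N ((a-1)/a)^(m-1) p_{T\t} >= delta^-1 p_{T\t} because a is at
   least the minority count.  Conversely, the ratio p_T / p_{T\t} at label
   t.2 is largest at x = t.1, where every feature count drops, so it is
   bounded by the ratio appearing in gamma_t. *)

Lemma ler_pred_ratio (R : numFieldType) (n a : nat) :
  (0 < n)%N -> (n <= a)%N -> (n%:R - 1) / n%:R <= (a%:R - 1) / a%:R :> R.
Proof.
move=> n_gt0 le_na; have a_gt0 := leq_trans n_gt0 le_na.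
rewrite !mulrBl !divff ?pnatr_eq0 -?lt0n // lerD2l lerN2.
by rewrite !mul1r lef_pV2 ?posrE ?ltr0n // ler_nat.
Qed.

Lemma ler_pred_ratio_expn (R : numFieldType) (n a k : nat) :
  (0 < n)%N -> (n <= a)%N ->
  ((n%:R - 1) / n%:R) ^+ k <= ((a%:R - 1) / a%:R) ^+ k :> R.
Proof.
move=> n_gt0 le_na; have a_gt0 := leq_trans n_gt0 le_na.
by rewrite lerXn2r ?nnegrE ?divr_ge0 ?subr_ge0 ?ler1n ?ler0n ?ler_pred_ratio.
Qed.

Lemma pred_ratio_rescale (R : fieldType) (n b p : R) (m : nat) :
  (0 < m)%N -> n != 0 -> n - 1 != 0 -> b != 0 -> b - 1 != 0 ->
  (n - 1) / n * ((b - 1) / b) ^+ (m - 1) * ((b - 1) * p / ((n - 1) * (b - 1) ^+ m))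
  = b * p / (n * b ^+ m).
Proof.
case: m => // k _ n0 n10 b0 b10; rewrite subn1 /= !exprS exprMn exprVn.
by field; rewrite !expf_neq0 ?n0 ?n10 ?b0 ?b10.
Qed.

Lemma nb_probE (R : realFieldType) (X : eqType) (Y : finType) (m : nat)
  (S : seq (record X Y m)) (x : m.-tuple X) (y : Y) :
  nb_prob R S x y = (cnt_y S y)%:R * \prod_(i < m) (cnt_xy S i (tnth x i) y)%:R
                    / ((size S)%:R * (cnt_y S y)%:R ^+ m).
Proof. by rewrite /nb_prob prodf_div prodr_const card_ord mulf_div. Qed.

Lemma nb_prob_ge0 (R : realFieldType) (X : eqType) (Y : finType) (m : nat)
  (S : seq (record X Y m)) (x : m.-tuple X) (y : Y) : 0 <= nb_prob R S x y.
Proof.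
by rewrite nb_probE !(mulr_ge0, invr_ge0, exprn_ge0, prodr_ge0) ?ler0n.
Qed.

Section RemoveRecord.

Variables (R : realFieldType) (X : eqType) (Y : finType) (m : nat).
Variables (T : seq (record X Y m)) (t : record X Y m).
Hypothesis tT : t \in T.

Local Notation p := (nb_prob R T).
Local Notation p' := (nb_prob R (rem t T)).
Local Notation N := (size T).

Lemma cnt_y_rem (y : Y) : cnt_y (rem t T) y = (cnt_y T y - (t.2 == y))%N.
Proof. by rewrite /cnt_y count_rem tT. Qed.

Lemma cnt_xy_rem (i : 'I_m) (xi : X) (y : Y) :
  cnt_xy (rem t T) i xi y = (cnt_xy T i xi y - ((tnth t.1 i == xi) && (t.2 == y)))%N.
Proof. by rewrite /cnt_xy count_rem tT. Qed.

Lemma nb_prob_rem_neq (x : m.-tuple X) (y : Y) :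
  (1 < N)%N -> y != t.2 -> p x y = (N%:R - 1) / N%:R * p' x y.
Proof.
move=> N_gt1 yt; have ty : (t.2 == y) = false by rewrite eq_sym (negbTE yt).
rewrite /nb_prob size_rem // cnt_y_rem ty subn0 mulrA.
under [in RHS]eq_bigr => i _ do rewrite cnt_xy_rem ty andbF subn0.
congr (_ * _); rewrite -subn1 natrB ?(ltnW N_gt1) //.
by field; rewrite subr_eq0 pnatr_eq1 pnatr_eq0 !gtn_eqF // ltnW.
Qed.

Lemma nb_prob_rem_eq_lb (x : m.-tuple X) :
  (0 < m)%N -> (2 <= cnt_y T t.2)%N ->
  (N%:R - 1) / N%:R * (((cnt_y T t.2)%:R - 1) / (cnt_y T t.2)%:R) ^+ (m - 1)
    * p' x t.2 <= p x t.2.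
Proof.
move=> m_gt0 a_ge2; have N_ge2 := leq_trans a_ge2 (count_size _ _).
have a_gt1 : (1 <= cnt_y T t.2)%N by apply: ltnW.
rewrite !nb_probE size_rem // cnt_y_rem eqxx -subn1 !natrB ?(ltnW N_ge2) //.
rewrite pred_ratio_rescale // ?pnatr_eq0 -?lt0n ?(ltnW N_ge2) ?subr_eq0
  ?pnatr_eq1 ?gtn_eqF //.
rewrite ler_wpM2r ?invr_ge0 ?mulr_ge0 ?exprn_ge0 ?ler0n // ler_wpM2l ?ler0n //.
by apply: ler_prod => i _; rewrite ler0n ler_nat cnt_xy_rem leq_subr.
Qed.

Lemma nb_prob_rem_eq_cross (x : m.-tuple X) :
  p x t.2 * p' t.1 t.2 <= p t.1 t.2 * p' x t.2.
Proof.
rewrite /nb_prob [X in X <= _]mulrACA [X in _ <= X]mulrACA -!big_split /=.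
rewrite ler_wpM2l // ?mulr_ge0 ?divr_ge0 ?invr_ge0 ?ler0n //.
(* Factorwise: n_{x_i} (n_{t_i} - 1) <= n_{t_i} (n_{x_i} - [x_i = t_i]). *)
apply: ler_prod => i _; rewrite !cnt_xy_rem !eqxx !andbT mulr_ge0 ?divr_ge0 ?ler0n //=.
rewrite [X in X <= _]mulrACA [X in _ <= X]mulrACA.
rewrite ler_wpM2r ?mulr_ge0 ?invr_ge0 ?ler0n // -!natrM ler_nat subn1.
case: eqP => [<-|_] /=; first by rewrite subn1 mulnC.
by rewrite subn0 mulnC leq_mul ?leq_pred.
Qed.

Lemma nb_prob_rem_ub (x : m.-tuple X) (y : Y) :
  (1 < N)%N -> 0 < p' t.1 t.2 ->
  p x y <= Num.max 1 (p t.1 t.2 / p' t.1 t.2) * p' x y.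
Proof.
move=> N_gt1 p't_gt0; have p'_ge0 z : 0 <= p' x z by apply: nb_prob_ge0.
case: (eqVneq y t.2) => [->|yt].
  have le_ratio_max : p t.1 t.2 / p' t.1 t.2 <= Num.max 1 (p t.1 t.2 / p' t.1 t.2).
    by rewrite le_max lexx orbT.
  apply: le_trans (ler_wpM2r (p'_ge0 _) le_ratio_max).
  by rewrite mulrAC ler_pdivlMr // nb_prob_rem_eq_cross.
rewrite nb_prob_rem_neq //; apply: ler_wpM2r => //.
rewrite le_max; apply/orP; left; rewrite ler_pdivrMr ?ltr0n ?(ltnW N_gt1) //.
by rewrite mul1r lerBlDr lerDl.
Qed.

Lemma nb_prob_rem_lb (x : m.-tuple X) (y : Y) :
  (0 < m)%N -> (2 <= cnt_y T t.2)%N ->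
  (N%:R - 1) / N%:R * (((cnt_y T t.2)%:R - 1) / (cnt_y T t.2)%:R) ^+ (m - 1)
    * p' x y <= p x y.
Proof.
move=> m_gt0 a_ge2; case: (eqVneq y t.2) => [->|yt]; first exact: nb_prob_rem_eq_lb.
have N_gt1 : (1 < N)%N := leq_trans a_ge2 (count_size _ _).
rewrite nb_prob_rem_neq // ler_wpM2r ?nb_prob_ge0 // ler_piMr ?divr_ge0 ?subr_ge0
  ?ler1n ?ler0n ?(ltnW N_gt1) //.
rewrite exprn_ile1 ?divr_ge0 ?subr_ge0 ?ler1n ?ler0n ?(ltnW a_ge2) //.
by rewrite ler_pdivrMr ?ltr0n ?(ltnW a_ge2) // mul1r lerBlDr lerDl.
Qed.

End RemoveRecord.

Theorem mainTheorem3 (R : realFieldType) (X : eqType) (Y : finType) (m : nat)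
  (T : seq (record X Y m)) (ymin : Y) :
  (0 < m)%N ->
  ymin \in map snd T ->
  (forall y : Y, y \in map snd T -> (cnt_y T ymin <= cnt_y T y)%N) ->
  (2 <= cnt_y T ymin)%N ->
  training_stable (@nb_prob R X Y m)
    (((cnt_y T ymin)%:R / ((cnt_y T ymin)%:R - 1)) ^+ (m - 1)%N *
     ((size T)%:R / ((size T)%:R - 1)))
    T.
Proof.
move=> m_gt0 _ ymin_min nmin_ge2.
set nmin := cnt_y T ymin in ymin_min nmin_ge2 *; set N := size T.
have N_ge2 : (2 <= N)%N := leq_trans nmin_ge2 (count_size _ _).
set delta := _ * _.
have delta_inv : delta^-1 = (N%:R - 1) / N%:R * ((nmin%:R - 1) / nmin%:R) ^+ (m - 1).
  by rewrite invfM -exprVn !invf_div mulrC.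
have N_ge2r : 2 <= N%:R :> R by rewrite (ler_nat R 2).
have nmin_ge2r : 2 <= nmin%:R :> R by rewrite (ler_nat R 2).
have delta_gt1 : 1 < delta.
  have s_gt1 : 1 < N%:R / (N%:R - 1) :> R by rewrite ltr_pdivlMr; lra.
  have q_ge1 : 1 <= nmin%:R / (nmin%:R - 1) :> R by rewrite ler_pdivlMr; lra.
  apply: (lt_le_trans s_gt1); rewrite /delta ler_peMl ?exprn_ege1 //.
  exact: ltW (lt_trans ltr01 s_gt1).
split=> // t tT p't_gt0 _ gamma x y.
have delta_le_gamma : delta <= gamma by rewrite le_max lexx.
have delta_gt0 : 0 < delta := lt_trans ltr01 delta_gt1.
have nmin_le : (nmin <= cnt_y T t.2)%N by apply/ymin_min/map_f.
split.
- apply: le_trans (nb_prob_rem_lb R tT x y m_gt0 (leq_trans nmin_ge2 nmin_le)).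
  apply: ler_wpM2r; first exact: nb_prob_ge0.
  rewrite (@le_trans _ _ delta^-1) ?lef_pV2 ?posrE ?(lt_le_trans delta_gt0) //.
  rewrite delta_inv ler_wpM2l ?ler_pred_ratio_expn ?(ltnW nmin_ge2) //.
  by rewrite divr_ge0 ?subr_ge0 //; lra.
- apply: le_trans (nb_prob_rem_ub tT x y N_ge2 p't_gt0) _.
  apply: ler_wpM2r; first exact: nb_prob_ge0.
  by rewrite ge_max !le_max lexx orbT (le_trans (ltW delta_gt1)).
Qed.
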